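(* Fix integers $k \ge 3$ and $i \in \{2,\dots,k-1\}$, and let $T = \{1,\dots,k\}\setminus\{i\}$. Let $d \ge 1$ and let $X \subset \mathbb{Z}_k^d$ be a hole in $\mathbb{Z}_k^d$. Then for any distinct elements $x_1,\dots,x_m \in X$, the set $(X\setminus\{x_1,\dots,x_m\})^{\dagger m}$ is a hole in $\mathbb{Z}_k^{d+m}$.
   Context: $\mathbb{Z}_k$ denotes the integers modulo $k$, with elements $0,\dots,k-1$. A copy of $T$ in $\mathbb{Z}_k^e$ is a set $\{x + j e_s : j \in \mathbb{Z}_k,\ j \ne j_0\}$ for some $x \in \mathbb{Z}_k^e$, $s\in\{1,\dots,e\}$ ($e_s$ the $s$-th unit vector), $j_0\in\mathbb{Z}_k$ (a coordinate line minus one point). A set $Y \subset \mathbb{Z}_k^e$ is a hole in $\mathbb{Z}_k^e$ if $\mathbb{Z}_k^e \setminus Y$ is a disjoint union of copies of $T$. For $S \subset \mathbb{Z}_k^e$, define $S^{\dagger} = (S \times \{0\}) \cup \{c_{e+1,e+1}\} \subset \mathbb{Z}_k^{e+1}$, where $c_{e+1,e+1}$ is the point of $\mathbb{Z}_k^{e+1}$ with last coordinate $k-1$ and all other coordinates $0$. For $m\ge1$, $S^{\dagger m}$ denotes the result of $m$ consecutive applications of $\dagger$ to $S$ (each time in the dimension of the current ambient torus), a subset of $\mathbb{Z}_k^{e+m}$. *)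

From mathcomp Require Import all_boot all_order all_algebra.
Set Implicit Arguments. Unset Strict Implicit. Unset Printing Implicit Defensive.
Import GRing.Theory.
Local Open Scope ring_scope.

(* Points of the torus Z_k^e (to be used with k >= 2). *)
Definition pt (k e : nat) := {ffun 'I_e -> 'Z_k}.

Definition shift (k e : nat) (x : pt k e) (s : 'I_e) (j : 'Z_k) : pt k e :=
  [ffun t => x t + (if t == s then j else 0)].

(* C is a copy of T: a coordinate line minus one point. *)
Definition is_copy (k e : nat) (C : {set pt k e}) : Prop :=
  exists (x : pt k e) (s : 'I_e) (j0 : 'Z_k),
    C = [set shift x s j | j in [pred j : 'Z_k | j != j0]].

Definition is_hole (k e : nat) (Y : {set pt k e}) : Prop :=
  exists P : {set {set pt k e}},
    [/\ (forall C, C \in P -> is_copy C), trivIset P & cover P = ~: Y].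

Definition ext0 (k e : nat) (x : pt k e) : pt k e.+1 :=
  [ffun t => match unlift ord_max t with Some t' => x t' | None => 0 end].

(* c_{e+1,e+1}: last coordinate k-1, others 0 *)
Definition cpt (k e : nat) : pt k e.+1 :=
  [ffun t => if t == ord_max then -1 else 0].

Definition dagger (k e : nat) (S : {set pt k e}) : {set pt k e.+1} :=
  (@ext0 k e @: S) :|: [set cpt k e].

Fixpoint daggern (k e m : nat) (S : {set pt k e}) : {set pt k (m + e)} :=
  match m return {set pt k (m + e)} with
  | 0 => S
  | m'.+1 => dagger (daggern m' S)
  end.

From mathcomp Require Import all_boot all_order all_algebra.
Set Implicit Arguments. Unset Strict Implicit. Unset Printing Implicit Defensive.
Import GRing.Theory.
Local Open Scope ring_scope.

(* Let y be a point of the hole Y. The complement of dagger (Y :\ y) in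
   Z_k^(e+1) is (~: Y) x {0}, tiled by lifting a tiling of ~: Y, together
   with F(y, 0), where F(y, w) consists of the points with nonzero last
   coordinate other than (w, -1), plus the point (y, 0). Each F(y, w) is tiled
   by induction on e: the lines in the first coordinate direction through the
   points with nonzero last coordinate, each punctured once, cover F(y, w)
   except for a copy of F(y', w') in the hyperplane where the first coordinate
   is y_1. Since dagger commutes with deleting a point of the base layer,
   removing x_1, ..., x_m one at a time proves the theorem. *)

Definition tileable (k e : nat) (S : {set pt k e}) : Prop :=
  exists P : {set {set pt k e}},
    [/\ (forall C, C \in P -> is_copy C), trivIset P & cover P = S].

Section Tiling.
Variables k e : nat.
Implicit Types A B : {set pt k e}.

Lemma tileable_copy A : is_copy A -> tileable A.
Proof.
move=> copyA; exists [set A]; split; rewrite ?cover1 ?trivIset1 //.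
by move=> C; rewrite inE => /eqP->.
Qed.

Lemma tileable_setU A B :
  [disjoint A & B] -> tileable A -> tileable B -> tileable (A :|: B).
Proof.
move=> AB [PA [copyA tiA eA]] [PB [copyB tiB eB]]; exists (PA :|: PB); split.
- by move=> C /setUP[]; [apply: copyA | apply: copyB].
- by apply: trivIsetU; rewrite ?eA ?eB.
- by rewrite -eA -eB /cover bigcup_setU.
Qed.

Lemma tileable_bigcup (I : finType) (P : pred I) (L : I -> {set pt k e}) :
  (forall i, P i -> is_copy (L i)) ->
  (forall i j, P i -> P j -> i != j -> [disjoint L i & L j]) ->
  tileable (\bigcup_(i | P i) L i).
Proof.
move=> copyL disjL; exists (L @: P); split; last by rewrite cover_imset.
- by move=> _ /imsetP[i Pi ->]; apply: copyL.
- apply/trivIsetP => _ _ /imsetP[i Pi ->] /imsetP[j Pj ->] neLij.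
  by apply: disjL => //; apply: contraNneq neLij => ->.
Qed.

End Tiling.

Lemma tileable_imset (k e e' : nat) (f : pt k e -> pt k e') (g : 'I_e -> 'I_e')
    (A : {set pt k e}) :
  injective f -> (forall x s j, f (shift x s j) = shift (f x) (g s) j) ->
  tileable A -> tileable (f @: A).
Proof.
move=> inj_f f_shift [P [copyP tiP <-]].
exists ((fun C : {set pt k e} => f @: C) @: P); split.
- move=> _ /imsetP[C /copyP[x [s [j0 ->]]] ->].
  exists (f x), (g s), j0; rewrite -imset_comp.
  by apply: eq_imset => j; exact: f_shift.
- by rewrite imset_trivIset.
- by rewrite cover_imset imset_cover.
Qed.

Section Coordinates.
Variable k : nat.

Definition ins_pt e (i0 : 'I_e.+1) (x : pt k e) (t : 'Z_k) : pt k e.+1 :=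
  [ffun i => if unlift i0 i is Some i' then x i' else t].

Definition del_pt e (i0 : 'I_e.+1) (p : pt k e.+1) : pt k e :=
  [ffun j => p (lift i0 j)].

Variables (e : nat) (i0 : 'I_e.+1).

Lemma ins_pt_at x t : ins_pt i0 x t i0 = t.
Proof. by rewrite ffunE unlift_none. Qed.

Lemma ins_pt_lift x t j : ins_pt i0 x t (lift i0 j) = x j.
Proof. by rewrite ffunE liftK. Qed.

Lemma pt_eq_at (p q : pt k e.+1) :
  p i0 = q i0 -> (forall j, p (lift i0 j) = q (lift i0 j)) -> p = q.
Proof.
by move=> eq_i0 eq_lift; apply/ffunP => i; case: (unliftP i0 i) => [j|]->.
Qed.

Variant ins_pt_spec : pt k e.+1 -> Type :=
  InsPt x t : ins_pt_spec (ins_pt i0 x t).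

Lemma ins_ptP p : ins_pt_spec p.
Proof.
suff -> : p = ins_pt i0 (del_pt i0 p) (p i0) by [].
by apply: pt_eq_at => [|j]; rewrite ?ins_pt_at ?ins_pt_lift ?ffunE.
Qed.

Lemma ins_pt_eq x x' t t' :
  (ins_pt i0 x t == ins_pt i0 x' t') = (x == x') && (t == t').
Proof.
apply/eqP/andP => [eq_ins | [/eqP-> /eqP->]] //; split; apply/eqP.
  by apply/ffunP => j; rewrite -(ins_pt_lift x t) eq_ins ins_pt_lift.
by rewrite -(ins_pt_at x t) eq_ins ins_pt_at.
Qed.

Lemma ins_pt_injl t : injective (ins_pt i0 ^~ t).
Proof. by move=> x x' /eqP; rewrite ins_pt_eq eqxx andbT => /eqP. Qed.

Lemma mem_ins_pt_imset (S : {set pt k e}) a x t :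
  (ins_pt i0 x t \in (ins_pt i0 ^~ a) @: S) = (t == a) && (x \in S).
Proof.
apply/imsetP/andP => [[z zS /eqP] | [/eqP-> xS]]; last by exists x.
by rewrite ins_pt_eq => /andP[/eqP-> /eqP->].
Qed.

Lemma ins_pt_shift t x s j :
  ins_pt i0 (shift x s j) t = shift (ins_pt i0 x t) (lift i0 s) j.
Proof.
apply: pt_eq_at => [|i]; rewrite !ffunE ?unlift_none ?liftK.
  by rewrite (negbTE (neq_lift _ _)) addr0.
by rewrite ffunE (inj_eq (@lift_inj _ _)).
Qed.

Lemma shift_ins_pt x t : shift (ins_pt i0 x 0) i0 t = ins_pt i0 x t.
Proof.
apply: pt_eq_at => [|i]; rewrite !ffunE ?unlift_none ?liftK ?eqxx ?add0r //.
by rewrite eq_sym (negbTE (neq_lift _ _)) addr0.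
Qed.

Definition punctured_line (u : pt k e) (j0 : 'Z_k) : {set pt k e.+1} :=
  [set ins_pt i0 u j | j in [pred j : 'Z_k | j != j0]].

Lemma is_copy_punctured_line u j0 : is_copy (punctured_line u j0).
Proof.
by exists (ins_pt i0 u 0), i0, j0; apply: eq_imset => j; rewrite shift_ins_pt.
Qed.

Lemma mem_punctured_line u j0 x t :
  (ins_pt i0 x t \in punctured_line u j0) = (x == u) && (t != j0).
Proof.
apply/imsetP/andP => [[j /= nj /eqP] | [/eqP-> nt]]; last by exists t.
by rewrite ins_pt_eq => /andP[-> /eqP->].
Qed.

Section PuncturedLines.
Variables (D : pred (pt k e)) (miss : pt k e -> 'Z_k).

Lemma mem_punctured_lines x t :
  (ins_pt i0 x t \in \bigcup_(u | D u) punctured_line u (miss u)) =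
  D x && (t != miss x).
Proof.
apply/bigcupP/andP => [[u Du] | [Dx nt]].
  by rewrite mem_punctured_line => /andP[/eqP-> ->].
by exists x; rewrite ?mem_punctured_line ?eqxx.
Qed.

Lemma tileable_punctured_lines :
  tileable (\bigcup_(u | D u) punctured_line u (miss u)).
Proof.
apply: tileable_bigcup => [u _ | u v _ _ neq_uv].
  exact: is_copy_punctured_line.
rewrite -setI_eq0; apply/eqP/setP => p; case: (ins_ptP p) => x t.
rewrite in_setI in_set0 !mem_punctured_line.
by case: (x =P u) => //= ->; rewrite (negbTE neq_uv) andbF.
Qed.

End PuncturedLines.
End Coordinates.

Arguments pt_eq_at {k e} i0 {p q}.
Arguments ins_ptP {k e} i0 p.

Lemma ins_pt_comm (k n : nat) (x : pt k n) a t :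
  ins_pt ord_max (ins_pt ord0 x a) t = ins_pt ord0 (ins_pt ord_max x t) a.
Proof.
have max_lift0 : (ord_max : 'I_n.+2) = lift ord0 ord_max by apply: val_inj.
apply: (pt_eq_at ord_max) => [|j].
  by rewrite max_lift0 !(ins_pt_at, ins_pt_lift).
rewrite ins_pt_lift; case: (unliftP ord0 j) => [j' ->|->].
  have -> : lift ord_max (lift ord0 j') = lift ord0 (lift ord_max j' : 'I_n.+1).
    by apply: val_inj; rewrite /= /bump /= !add1n ltnS (leqNgt n j') ltn_ord.
  by rewrite !ins_pt_lift.
have -> : lift ord_max (ord0 : 'I_n.+1) = ord0 :> 'I_n.+2 by apply: val_inj.
by rewrite !ins_pt_at.
Qed.

Section SwappedLayers.
Variable k : nat.

Lemma oppr1_neq0 : (-1 : 'Z_k) != 0.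
Proof. by rewrite oppr_eq0 oner_neq0. Qed.

Definition swapped_layers e (y w : pt k e) : {set pt k e.+1} :=
  [set p : pt k e.+1 | p ord_max != 0] :\ ins_pt ord_max w (-1)
  :|: [set ins_pt ord_max y 0].

Lemma mem_swapped_layers e (y w x : pt k e) t :
  (ins_pt ord_max x t \in swapped_layers y w) =
  (t != 0) && ~~ ((x == w) && (t == -1)) || (x == y) && (t == 0).
Proof. by rewrite !inE !ins_pt_eq ins_pt_at andbC. Qed.

Lemma swapped_layers0 (y w : pt k 0) :
  swapped_layers y w = punctured_line ord_max y (-1).
Proof.
have pt0_eq (x x' : pt k 0) : x == x' by apply/eqP/ffunP => -[].
apply/setP => p; case: (ins_ptP ord_max p) => x t.
rewrite mem_swapped_layers mem_punctured_line !pt0_eq /=.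
by case: (t =P 0) => [->|_]; rewrite ?orbF ?orbT // eq_sym oppr1_neq0.
Qed.

Section Step.
Variables (n : nat) (y w : pt k n) (y0 w0 : 'Z_k).
Let miss (u : pt k n.+1) := if u == ins_pt ord_max w (-1) then w0 else y0.

Lemma swapped_layersS :
  swapped_layers (ins_pt ord0 y y0) (ins_pt ord0 w w0) =
  \bigcup_(u : pt k n.+1 | u ord_max != 0) punctured_line ord0 u (miss u)
  :|: (ins_pt ord0 ^~ y0) @: swapped_layers y w.
Proof.
apply/setP => p; case: (ins_ptP ord0 p) => u c; case: (ins_ptP ord_max u) => v s.
rewrite [in RHS]in_setU mem_punctured_lines mem_ins_pt_imset -ins_pt_comm.
rewrite !mem_swapped_layers ins_pt_at /miss !ins_pt_eq.
case: (s =P -1) => [->|_]; rewrite ?(negbTE oppr1_neq0);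
by case: (v == w); case: (v == y); case: (c == w0); case: (c == y0);
  case: (s == 0).
Qed.

Lemma tileable_swapped_layersS :
  tileable (swapped_layers y w) ->
  tileable (swapped_layers (ins_pt ord0 y y0) (ins_pt ord0 w w0)).
Proof.
move=> tile_yw; rewrite swapped_layersS; apply: tileable_setU.
- rewrite -setI_eq0; apply/eqP/setP => p.
  case: (ins_ptP ord0 p) => u c; case: (ins_ptP ord_max u) => v s.
  rewrite in_setI in_set0 mem_punctured_lines mem_ins_pt_imset.
  rewrite mem_swapped_layers ins_pt_at /miss ins_pt_eq.
  by case: (s == 0); case: (v == w); case: (s == -1); case: (c == y0);
    case: (v == y); rewrite /= ?andbF.
- exact: tileable_punctured_lines.
- by apply: tileable_imset tile_yw; [exact: ins_pt_injl | exact: ins_pt_shift].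
Qed.

End Step.

Lemma tileable_swapped_layers e (y w : pt k e) : tileable (swapped_layers y w).
Proof.
elim: e y w => [|n IH] y w.
  by rewrite swapped_layers0; apply/tileable_copy/is_copy_punctured_line.
case: (ins_ptP ord0 y) => y' y0; case: (ins_ptP ord0 w) => w' w0.
exact/tileable_swapped_layersS/IH.
Qed.

End SwappedLayers.

Section Dagger.
Variable k : nat.

Lemma ext0E e : @ext0 k e = ins_pt ord_max ^~ 0.
Proof. by []. Qed.

Lemma cptE e : cpt k e = ins_pt ord_max 0 (-1).
Proof.
apply: (pt_eq_at ord_max) => [|j]; rewrite ?ins_pt_at ?ins_pt_lift ffunE ?eqxx //.
by rewrite eq_sym (negbTE (neq_lift _ _)) ffunE.
Qed.

Lemma mem_dagger e (S : {set pt k e}) x t :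
  (ins_pt ord_max x t \in dagger S) =
  (t == 0) && (x \in S) || (x == 0) && (t == -1).
Proof. by rewrite in_setU ext0E mem_ins_pt_imset inE cptE ins_pt_eq. Qed.

Lemma mem_ext0_dagger e (S : {set pt k e}) x : (ext0 x \in dagger S) = (x \in S).
Proof.
rewrite ext0E mem_dagger eqxx [0 == _]eq_sym (negbTE (oppr1_neq0 k)).
by rewrite andbF orbF.
Qed.

Lemma dagger_setD1 e (S : {set pt k e}) x : dagger (S :\ x) = dagger S :\ ext0 x.
Proof.
apply/setP => p; case: (ins_ptP ord_max p) => z t.
rewrite [in RHS]in_setD1 ext0E !mem_dagger ins_pt_eq in_setD1.
case: (t =P 0) => [->|_]; rewrite ?[0 == _]eq_sym ?(negbTE (oppr1_neq0 k)) /=.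
  by rewrite !andbF !orbF andbT.
by rewrite andbF.
Qed.

Lemma compl_dagger_setD1 e (Y : {set pt k e}) y :
  ~: dagger (Y :\ y) = ((ins_pt ord_max ^~ 0) @: ~: Y) :|: swapped_layers y 0.
Proof.
apply/setP => p; case: (ins_ptP ord_max p) => x t.
rewrite [in RHS]in_setU inE mem_dagger mem_ins_pt_imset mem_swapped_layers !inE.
case: (t =P 0) => [->|_]; rewrite ?[0 == _]eq_sym ?(negbTE (oppr1_neq0 k)) /=.
  by rewrite !andbF !orbF andbT; case: (x == y); case: (x \in Y).
by rewrite andbF orbF.
Qed.

Lemma hole_dagger_setD1 e (Y : {set pt k e}) y :
  is_hole Y -> y \in Y -> is_hole (dagger (Y :\ y)).
Proof.
move=> holeY Yy; change (tileable (~: dagger (Y :\ y))).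
rewrite compl_dagger_setD1; apply: tileable_setU.
- rewrite -setI_eq0; apply/eqP/setP => p; case: (ins_ptP ord_max p) => x t.
  rewrite in_setI in_set0 mem_ins_pt_imset mem_swapped_layers inE.
  by case: (t == 0); case: (x =P y) => [->|]; rewrite ?Yy /= ?andbF.
- by apply: tileable_imset holeY; [exact: ins_pt_injl | exact: ins_pt_shift].
- exact: tileable_swapped_layers.
Qed.

Fixpoint ext0n e m (x : pt k e) : pt k (m + e) :=
  if m is m'.+1 then ext0 (ext0n m' x) else x.

Lemma daggern_setD1 e m (S : {set pt k e}) x :
  daggern m (S :\ x) = daggern m S :\ ext0n m x.
Proof. by elim: m => //= m ->; rewrite dagger_setD1. Qed.

Lemma mem_ext0n_daggern e m (S : {set pt k e}) x :
  (ext0n m x \in daggern m S) = (x \in S).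
Proof. by elim: m => //= m <-; rewrite mem_ext0_dagger. Qed.

Lemma hole_daggern_setD e (X : {set pt k e}) (xs : seq (pt k e)) :
  is_hole X -> uniq xs -> {subset xs <= X} ->
  is_hole (daggern (size xs) (X :\: [set x in xs])).
Proof.
move=> holeX; elim/last_ind: xs => [|xs a IH] /=.
  by move=> _ _; rewrite (_ : X :\: _ = X) //; apply/setP => x; rewrite !inE.
rewrite rcons_uniq => /andP[xs'a uniq_xs] sub_xsa.
have -> : X :\: [set x in rcons xs a] = (X :\: [set x in xs]) :\ a.
  by apply/setP => x; rewrite !inE mem_rcons in_cons negb_or andbA.
rewrite size_rcons /= daggern_setD1; apply: hole_dagger_setD1.
  by apply: IH => // x xs_x; apply: sub_xsa; rewrite mem_rcons in_cons xs_x orbT.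
by rewrite mem_ext0n_daggern !inE xs'a sub_xsa // mem_rcons mem_head.
Qed.

End Dagger.

Theorem corollary6 (k i d : nat) (X : {set pt k d}) (xs : seq (pt k d)) :
  (3 <= k)%N -> (2 <= i <= k - 1)%N -> (1 <= d)%N ->
  is_hole X ->
  uniq xs -> (forall x, x \in xs -> x \in X) -> (1 <= size xs)%N ->
  is_hole (daggern (size xs) (X :\: [set x in xs])).
Proof.
by move=> _ _ _ holeX uniq_xs sub_xs _; apply: hole_daggern_setD.
Qed.
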